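(* Let ${\bf r}=(r_0,r_1,\dots)$ be a finitely supported sequence of nonnegative integers with $n=\sum_{d\ge1}r_d\ge1$ and $\ell=-\sum_{d\ge0}(d-1)r_d\ge1$, and let $k\ge0$ be an integer. Then $$|\mathcal{CF}_{{\bf r},k}|=\binom{n}{r_1,r_2,\dots}\,\ell\,1^{r_1}2^{r_2}3^{r_3}\cdots\prod_{i=1}^{n-1}\big(r_0+i(1+k)\big).$$
   Context: A plane tree is an unlabelled rooted tree in which the children of every vertex are linearly ordered; a plane forest is a finite linearly ordered sequence of plane trees. For vertices $u,v$ in a tree, $v$ is a descendant of $u$ if $u$ lies on the path from the root to $v$ (so $u$ is a descendant of itself). The degree $d_v$ is the number of children of $v$; $v$ is internal if $d_v\ge1$. $I(F)$ is the set of internal vertices of $F$. A plane forest has type ${\bf r}$ if it has exactly $r_i$ vertices of degree $i$ for all $i\ge0$. A labelled forest is a plane forest $F$ together with a bijection (labelling) $I(F)\to[n]$. An internal vertex $v$ of a labelled forest is proper if no internal descendant of $v$ has a smaller label than $v$, and improper otherwise. Fix colors $c_1,c_2,\dots$ and distinct special colors $c_1',c_2',\dots$. A proper $k$-coloring of a labelled forest assigns to each internal vertex $v$ a color, taken from $\{c_1,\dots,c_{d_v}\}$ if $v$ is proper and from $\{c_1,\dots,c_{d_v}\}\cup\{c_1',\dots,c_k'\}$ if $v$ is improper. A $k$-colored labelled forest is a labelled forest together with a proper $k$-coloring; $\mathcal{CF}_{{\bf r},k}$ is the set of $k$-colored labelled forests whose underlying plane forest has type ${\bf r}$. *)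

From mathcomp Require Import all_boot all_order all_algebra.
From Stdlib Require List.
Set Implicit Arguments. Unset Strict Implicit. Unset Printing Implicit Defensive.
Import GRing.Theory Num.Theory.

(* Colors: [inl i] is the ordinary color c_i, [inr j] is the special color c'_j. *)
Definition color := (nat + nat)%type.

Inductive ctree : Type :=
| CLeaf : ctree
| CNode : nat -> color -> seq ctree -> ctree.

Definition cforest := seq ctree.

Fixpoint labels (t : ctree) : seq nat :=
  match t with
  | CLeaf => [::]
  | CNode l _ ch => l :: flatten (map labels ch)
  end.

Fixpoint degs (t : ctree) : seq nat :=
  match t with
  | CLeaf => [:: 0]
  | CNode _ _ ch => size ch :: flatten (map degs ch)
  end.

Definition forest_labels (F : cforest) : seq nat := flatten (map labels F).
Definition forest_degs (F : cforest) : seq nat := flatten (map degs F).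

(* Well-formedness and proper k-coloring: every vertex stored as [CNode] is
   internal (degree >= 1); its color is c_i with 1 <= i <= d_v, or, if v is
   improper (some internal descendant has a smaller label), c'_j with
   1 <= j <= k. *)
Fixpoint proper_colored (k : nat) (t : ctree) : bool :=
  match t with
  | CLeaf => true
  | CNode l c ch =>
      [&& 0 < size ch,
          match c with
          | inl i => (1 <= i <= size ch)%N
          | inr j => (1 <= j <= k)%N && has (fun m => m < l)%N (flatten (map labels ch))
          end
        & all (proper_colored k) ch]
  end.

(* The set CF_{r,k}: k-colored labelled forests of type r, where
   r_i = nth 0 r i (a finitely supported sequence). The labelling is a
   bijection from the internal vertices onto [n] = {1,...,n}. *)
Definition CF (r : seq nat) (k : nat) (F : cforest) : Prop :=
  [/\ forall i : nat, count_mem i (forest_degs F) = nth 0 r i,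
      perm_eq (forest_labels F) (iota 1 (size (forest_labels F)))
    & all (proper_colored k) F].

Definition card_is (T : Type) (P : T -> Prop) (N : nat) : Prop :=
  exists s : list T, List.NoDup s /\ (forall x, List.In x s <-> P x) /\ length s = N.

Definition nint (r : seq nat) : nat := \sum_(1 <= d < size r) nth 0 r d.

Definition ell (r : seq nat) : int :=
  - \sum_(0 <= d < size r) ((d%:Z - 1) * (nth 0 r d)%:Z)%R.

Definition multinom (r : seq nat) : nat :=
  (nint r)`! %/ \prod_(1 <= d < size r) (nth 0 r d)`!.

Definition degprod (r : seq nat) : nat := \prod_(1 <= d < size r) d ^ (nth 0 r d).

From Stdlib Require List.
From mathcomp Require Import all_boot all_order all_algebra zify ring.
Import Order.TTheory GRing.Theory Num.Theory.
Set Implicit Arguments. Unset Strict Implicit. Unset Printing Implicit Defensive.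

(* Rotating the trees of a forest permutes CF_{r,k}, so label 1 lies equally
   often in each of the ell trees and |CF_{r,k}| = ell * Y(r), where Y(r) counts
   the forests whose first tree contains label 1.  Deleting the root of that
   first tree (degree d, label l, color c) and closing the gap at l in the
   labelling is a bijection onto: a forest of type r - e_d, together with either
   l = 1 and one of the d ordinary colors, or l in {2..n}, one of the d + k
   colors, and label 1 lying in the first d trees (which is what makes the root
   improper).  Counting the latter forests by rotation again gives, for n >= 2,
     Y(r) = sum_d d (ell(r - e_d) + (n - 1)(d + k)) Y(r - e_d),
   and the product formula for Y(r) follows by induction on n. *)

Lemma In_mem (T : eqType) (x : T) s : List.In x s <-> x \in s.
Proof.
elim: s => [|y s IH] //=; rewrite in_cons; split.
- by case=> [->|/IH ->]; rewrite ?eqxx ?orbT.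
- by case/orP=> [/eqP ->|/IH]; [left|right].
Qed.

Section CardIs.

Variable T : Type.
Implicit Types (P Q : T -> Prop) (N M : nat).

Lemma eq_card_is P Q N : (forall x, P x <-> Q x) -> card_is P N -> card_is Q N.
Proof. by move=> PQ [s [nd [Ps sz]]]; exists s; split=> //; split=> // x; rewrite Ps PQ. Qed.

Lemma card_is0 P : (forall x, ~ P x) -> card_is P 0.
Proof.
by move=> nP; exists [::]; split; [exact: List.NoDup_nil | split=> // x; split=> // /nP].
Qed.

Lemma card_is_singleton (x0 : T) : card_is (fun x => x = x0) 1.
Proof.
exists [:: x0]; split; first by constructor=> //; constructor.
by split=> // x /=; split; [case=> // | left].
Qed.

Lemma card_is_union P Q N M : card_is P N -> card_is Q M ->
  (forall x, P x -> Q x -> False) -> card_is (fun x => P x \/ Q x) (N + M).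
Proof.
move=> [s [nd [Ps <-]]] [t [nt [Qt <-]]] PQ; exists (s ++ t); split.
  by apply: List.NoDup_app => // x /Ps Px /Qt /(PQ x Px).
by split=> [x|]; rewrite ?List.length_app // List.in_app_iff Ps Qt.
Qed.

Lemma card_is_image (U : Type) P (f : T -> U) N : card_is P N ->
  (forall x y, P x -> P y -> f x = f y -> x = y) ->
  card_is (fun z => exists x, P x /\ z = f x) N.
Proof.
move=> [s [nd [Ps <-]]] f_inj; exists (List.map f s); split.
  have : forall x, List.In x s -> P x by move=> x /Ps.
  elim: s nd {Ps} => [|a s IH] nd sP /=; first exact: List.NoDup_nil.
  move/List.NoDup_cons_iff: nd => [a_s nd].
  constructor; last by apply: IH => // x xs; apply: sP; right.
  move/List.in_map_iff=> [y [fya ys]].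
  by apply: a_s; rewrite -(f_inj y a) //; apply: sP; [right|left].
split=> [z|]; last by rewrite List.length_map.
rewrite List.in_map_iff; split.
- by move=> [x [<- /Ps Px]]; exists x.
- by move=> [x [Px ->]]; exists x; split=> //; apply/Ps.
Qed.

Lemma card_is_prod (U : Type) P (Q : U -> Prop) N M :
  card_is P N -> card_is Q M -> card_is (fun p : T * U => P p.1 /\ Q p.2) (N * M).
Proof.
move=> [s [nd [Ps <-]]] [t [nt [Qt <-]]]; exists (List.list_prod s t); split.
  elim: s nd {Ps} => [|a s IH] nd /=; first exact: List.NoDup_nil.
  move/List.NoDup_cons_iff: nd => [a_s nd].
  apply: List.NoDup_app; [|exact: IH|].
    clear IH; elim: t nt {Qt} => [|b t IHt] nt /=; first exact: List.NoDup_nil.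
    move/List.NoDup_cons_iff: nt => [b_t nt]; constructor; last exact: IHt.
    by move/List.in_map_iff=> [z [[zb] zt]]; apply: b_t; rewrite -zb.
  move=> [x y] /List.in_map_iff [z [[<- _] _]] /List.in_prod_iff [xs _].
  exact: a_s.
split=> [[a b]|]; last by rewrite List.length_prod.
by rewrite List.in_prod_iff Ps Qt.
Qed.

Lemma card_is_big_union (I : eqType) (s : seq I) (P : I -> T -> Prop) (N : I -> nat) :
  uniq s -> (forall i, i \in s -> card_is (P i) (N i)) ->
  (forall i j x, i \in s -> j \in s -> P i x -> P j x -> i = j) ->
  card_is (fun x => exists2 i, i \in s & P i x) (\sum_(i <- s) N i).
Proof.
elim: s => [|i s IH] /=; first by rewrite big_nil => *; apply: card_is0 => x [].
case/andP=> i_s s_uniq cardP disjP; rewrite big_cons.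
have card_s : card_is (fun x => exists2 j, j \in s & P j x) (\sum_(j <- s) N j).
  apply: IH => // [j js|j j' x js j's]; first by apply: cardP; rewrite in_cons js orbT.
  by apply: disjP; rewrite in_cons ?js ?j's orbT.
apply: eq_card_is (card_is_union (cardP i (mem_head _ _)) card_s _) => [x|x Pi [j js Pj]].
  split=> [[Pi|[j js Pj]]|[j]]; first by exists i; rewrite ?mem_head.
    by exists j; rewrite // in_cons js orbT.
  by rewrite in_cons => /orP [/eqP ->|js Pj]; [left | right; exists j].
by move: i_s; rewrite (disjP i j x) ?mem_head ?in_cons ?js ?orbT.
Qed.

End CardIs.

Lemma card_is_mem (T : eqType) (s : seq T) : uniq s -> card_is (fun x => x \in s) (size s).
Proof.
move=> s_uniq; exists s; split; last by split=> // x; rewrite In_mem.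
elim: s s_uniq => [|x s IH] /=; first by constructor.
by case/andP=> x_s s_uniq; constructor; [rewrite In_mem; apply/negP | exact: IH].
Qed.

Lemma card_is_interval a b : card_is (fun x => a <= x < b) (b - a).
Proof.
have := card_is_mem (iota_uniq a (b - a)); rewrite size_iota.
by apply: eq_card_is => x; rewrite mem_iota; lia.
Qed.

(* Needed because ctree is a nested inductive: the generated ctree_ind gives no
   induction hypothesis for the children. *)
Fixpoint ctree_Forall_ind (P : ctree -> Prop) (HL : P CLeaf)
    (HN : forall l c ch, List.Forall P ch -> P (CNode l c ch)) (t : ctree) : P t :=
  match t with
  | CLeaf => HL
  | CNode l c ch => HN l c ch
      ((fix Forall_ch (s : seq ctree) : List.Forall P s :=
          match s with
          | [::] => List.Forall_nil P
          | t :: s' => List.Forall_cons t (ctree_Forall_ind HL HN t) (Forall_ch s')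
          end) ch)
  end.

Fixpoint relabel (f : nat -> nat) (t : ctree) : ctree :=
  match t with
  | CLeaf => CLeaf
  | CNode l c ch => CNode (f l) c (map (relabel f) ch)
  end.

Lemma labels_relabel f t : labels (relabel f t) = map f (labels t).
Proof.
elim/ctree_Forall_ind: t => //= l c ch IH; congr (_ :: _).
by rewrite map_flatten -!map_comp; congr flatten; exact: List.map_ext_Forall IH.
Qed.

Lemma degs_relabel f t : degs (relabel f t) = degs t.
Proof.
elim/ctree_Forall_ind: t => //= l c ch IH.
by rewrite size_map -map_comp; congr (_ :: flatten _); exact: List.map_ext_Forall IH.
Qed.

Lemma relabel_comp f g t : relabel f (relabel g t) = relabel (f \o g) t.
Proof.
elim/ctree_Forall_ind: t => //= l c ch IH.
by rewrite -map_comp; congr CNode; exact: List.map_ext_Forall IH.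
Qed.

Lemma relabel_id_in f t : {in labels t, f =1 id} -> relabel f t = t.
Proof.
elim/ctree_Forall_ind: t => //= l c ch IH f_id.
rewrite f_id ?mem_head //; congr CNode.
have {}f_id : {in flatten (map labels ch), f =1 id}.
  by move=> x x_ch; apply: f_id; rewrite in_cons x_ch orbT.
elim: ch IH f_id => //= t ch IHch /List.Forall_cons_iff [IHt IH] f_id.
by rewrite IHt ?IHch // => x x_in; apply: f_id; rewrite mem_cat x_in ?orbT.
Qed.

Lemma forest_labels_cat F G : forest_labels (F ++ G) = forest_labels F ++ forest_labels G.
Proof. by rewrite /forest_labels map_cat flatten_cat. Qed.

Lemma forest_degs_cat F G : forest_degs (F ++ G) = forest_degs F ++ forest_degs G.
Proof. by rewrite /forest_degs map_cat flatten_cat. Qed.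

Lemma forest_labels_relabel f F : forest_labels (map (relabel f) F) = map f (forest_labels F).
Proof.
rewrite /forest_labels map_flatten -!map_comp; congr flatten.
by apply: eq_map => t /=; rewrite labels_relabel.
Qed.

Lemma forest_degs_relabel f F : forest_degs (map (relabel f) F) = forest_degs F.
Proof.
by rewrite /forest_degs -map_comp; congr flatten; apply: eq_map => t /=; rewrite degs_relabel.
Qed.

Lemma proper_colored_relabel k f t : {mono f : x y / x < y} ->
  proper_colored k (relabel f t) = proper_colored k t.
Proof.
move=> f_mono; elim/ctree_Forall_ind: t => //= l c ch IH.
rewrite size_map -[flatten _]/(forest_labels _) forest_labels_relabel has_map.
rewrite (@eq_has _ _ (fun m => m < l)) => [|x]; last by rewrite /= f_mono.
rewrite all_map; congr [&& _, _ & _].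
by elim: ch IH => //= t ch IHch /List.Forall_cons_iff [-> /IHch ->].
Qed.

Lemma all_proper_colored_relabel k f F : {mono f : x y / x < y} ->
  all (proper_colored k) (map (relabel f) F) = all (proper_colored k) F.
Proof.
by move=> f_mono; rewrite all_map; apply: eq_all => t /=; rewrite proper_colored_relabel.
Qed.

Lemma size_degs t : size (degs t) = (sumn (degs t)).+1.
Proof.
elim/ctree_Forall_ind: t => //= l c ch IH; congr S.
elim: ch IH => //= t ch IHch /List.Forall_cons_iff [IHt IH].
by rewrite size_cat sumn_cat IHt (IHch IH); lia.
Qed.

Lemma size_labels k t : proper_colored k t -> size (labels t) = count (leq 1) (degs t).
Proof.
elim/ctree_Forall_ind: t => //= l c ch IH /and3P [-> _ ch_proper]; congr S.
elim: ch IH ch_proper => //= t ch IHch /List.Forall_cons_iff [IHt IH] /andP [t_proper ch_proper].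
by rewrite size_cat count_cat IHt // IHch.
Qed.

Lemma size_forest_degs F : size (forest_degs F) = size F + sumn (forest_degs F).
Proof.
elim: F => //= t F IH; rewrite /forest_degs /= size_cat sumn_cat -/(forest_degs F).
by rewrite IH size_degs; lia.
Qed.

Lemma size_forest_labels k F : all (proper_colored k) F ->
  size (forest_labels F) = count (leq 1) (forest_degs F).
Proof.
elim: F => //= t F IH /andP [t_proper F_proper].
rewrite /forest_labels /forest_degs /= size_cat count_cat (size_labels t_proper).
by rewrite -/(forest_labels F) -/(forest_degs F) IH.
Qed.

Lemma bigD1_nat (R : Type) (idx : R) (op : Monoid.com_law idx) (F : nat -> R) a b d :
  a <= d < b -> \big[op/idx]_(a <= i < b) F i = op (F d) (\big[op/idx]_(a <= i < b | i != d) F i).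
Proof. by move=> d_ab; rewrite (bigD1_seq d) ?mem_index_iota ?iota_uniq. Qed.
Arguments bigD1_nat {R idx} op {F a b} d.

Lemma sumn_map_count (g : nat -> nat) s m : all (fun x => x < m) s ->
  sumn (map g s) = \sum_(0 <= i < m) g i * count_mem i s.
Proof.
elim: s => [|x s IH] /=; first by rewrite big1 // => i _; rewrite muln0.
case/andP=> x_m s_m; rewrite IH //.
rewrite [in RHS](eq_bigr (fun i => g i * (x == i) + g i * count_mem i s)).
  rewrite big_split /=; congr (_ + _); rewrite (bigD1_nat _ x) ?eqxx ?muln1 /=; last lia.
  by rewrite big1 ?addn0 // => i /negbTE; rewrite eq_sym => ->; rewrite muln0.
by move=> i _; rewrite mulnDr.
Qed.

Definition has_type (r : seq nat) (F : cforest) :=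
  forall i, count_mem i (forest_degs F) = nth 0 r i.

Lemma has_type_degs_lt r F : has_type r F -> all (fun x => x < size r) (forest_degs F).
Proof.
move=> F_type; apply/allP => x x_F; rewrite ltnNge; apply/negP => r_x.
by move: (F_type x); rewrite nth_default // => /eqP; rewrite -leqn0 leqNgt -has_count has_pred1 x_F.
Qed.

Lemma has_type_stats r F : has_type r F ->
  [/\ size (forest_degs F) = \sum_(0 <= i < size r) nth 0 r i,
      sumn (forest_degs F) = \sum_(0 <= i < size r) i * nth 0 r i
    & count (leq 1) (forest_degs F) = \sum_(1 <= i < size r) nth 0 r i].
Proof.
move=> F_type; have lt_r := has_type_degs_lt F_type.
have sumnE g : sumn (map g (forest_degs F)) = \sum_(0 <= i < size r) g i * nth 0 r i.
  by rewrite (sumn_map_count g lt_r); apply: eq_bigr => i _; rewrite F_type.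
split.
- transitivity (sumn (map (fun=> 1) (forest_degs F))); first by elim: (forest_degs F) => //= x s ->.
  by rewrite sumnE; apply: eq_bigr => i _; rewrite mul1n.
- by rewrite -sumnE map_id.
rewrite -sumn_count sumnE; case: (posnP (size r)) => [->|r_gt0]; first by rewrite !big_geq.
by rewrite big_ltn //= add0n; apply: eq_big_nat => i /andP [i_gt0 _]; rewrite i_gt0 mul1n.
Qed.

Lemma size_forest_labels_CF r k F : CF r k F -> size (forest_labels F) = nint r.
Proof.
by case=> F_type _ F_proper; rewrite (size_forest_labels F_proper); case: (has_type_stats F_type).
Qed.

Lemma uniq_forest_labels_CF r k F : CF r k F -> uniq (forest_labels F).
Proof. by case=> _ F_labels _; rewrite (perm_uniq F_labels) iota_uniq. Qed.

(* Every tree has one vertex more than it has edges, so #trees = sum r_d - sum d r_d. *)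
Lemma size_CF r k F : CF r k F -> ((size F)%:Z = ell r)%R.
Proof.
case=> F_type _ _; have := size_forest_degs F; case: (has_type_stats F_type) => -> -> _ sizeF.
have -> : size F = \sum_(0 <= i < size r) nth 0 r i - \sum_(0 <= i < size r) i * nth 0 r i by lia.
have le_sums : \sum_(0 <= i < size r) i * nth 0 r i <= \sum_(0 <= i < size r) nth 0 r i by lia.
rewrite /ell -sumrN -(subzn le_sums) !(big_morph Posz PoszD (erefl (Posz 0))) -sumrB.
by apply: eq_bigr => i _; rewrite PoszM; ring.
Qed.

Definition decr_nth (r : seq nat) d := set_nth 0 r d (nth 0 r d).-1.

Lemma nth_decr_nth r d i : nth 0 (decr_nth r d) i = if i == d then (nth 0 r d).-1 else nth 0 r i.
Proof. by rewrite /decr_nth nth_set_nth. Qed.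

Lemma size_decr_nth r d : d < size r -> size (decr_nth r d) = size r.
Proof. by move=> d_r; rewrite /decr_nth size_set_nth; apply/maxn_idPr. Qed.

Lemma big_decr_nth (R : Type) (idx : R) (op : Monoid.com_law idx) (g : nat -> nat -> R) r d a :
  a <= d < size r ->
  \big[op/idx]_(a <= i < size r) g i (nth 0 (decr_nth r d) i) =
  op (g d (nth 0 r d).-1) (\big[op/idx]_(a <= i < size r | i != d) g i (nth 0 r i)).
Proof.
move=> d_r; rewrite (bigD1_nat op d) // nth_decr_nth eqxx; congr (op _ _).
by apply: eq_bigr => i /negbTE i_d; rewrite nth_decr_nth i_d.
Qed.
Arguments big_decr_nth {R idx} op g {r d a}.

Lemma prod_fact_dvdn (I : Type) (s : seq I) (a : I -> nat) :
  \prod_(i <- s) (a i)`! %| (\sum_(i <- s) a i)`!.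
Proof.
elim: s => [|i s IH]; first by rewrite !big_nil.
rewrite !big_cons -(bin_fact (leq_addr (\sum_(j <- s) a j) (a i))) addKn.
exact: dvdn_mull (dvdn_mul (dvdnn _) IH).
Qed.

Definition fact_prod (r : seq nat) := \prod_(1 <= d < size r) (nth 0 r d)`!.

Lemma multinom_fact_prod r : multinom r * fact_prod r = (nint r)`!.
Proof. by rewrite /multinom divnK // prod_fact_dvdn. Qed.

Lemma fact_prod_gt0 r : 0 < fact_prod r.
Proof. by rewrite prodn_gt0 // => i; rewrite fact_gt0. Qed.

Section DecrNth.

Variables (r : seq nat) (d : nat).
Hypotheses (d_r : 1 <= d < size r) (r_d : 0 < nth 0 r d).

Lemma nint_gt0 : 0 < nint r.
Proof. by rewrite /nint (bigD1_nat _ d) //= addn_gt0 r_d. Qed.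

Lemma nint_decr_nth : nint (decr_nth r d) = (nint r).-1.
Proof.
rewrite /nint size_decr_nth; last by case/andP: d_r.
by rewrite (big_decr_nth _ (fun _ x => x)) // (bigD1_nat _ d) //=; lia.
Qed.

Lemma ell_decr_nth : ell (decr_nth r d) = (ell r + d%:Z - 1)%R.
Proof.
rewrite /ell size_decr_nth; last by case/andP: d_r.
rewrite (big_decr_nth _ (fun i x => ((i%:Z - 1) * x%:Z)%R)); last lia.
rewrite (bigD1_nat _ d) /=; last lia.
by rewrite predn_int // !opprD; ring.
Qed.

Lemma nth0_decr_nth : nth 0 (decr_nth r d) 0 = nth 0 r 0.
Proof. by rewrite nth_decr_nth; case: eqP => // d0; move: d_r; rewrite -d0. Qed.

Lemma absz_ell_decr_nth : (1 <= ell r)%R -> absz (ell (decr_nth r d)) = absz (ell r) + d - 1.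
Proof.
move=> ell_ge1; rewrite ell_decr_nth -[ell r]gez0_abs ?(le_trans _ ell_ge1) //.
by rewrite -PoszD -predn_int ?absz_nat; lia.
Qed.

Lemma fact_prod_decr_nth : fact_prod r = nth 0 r d * fact_prod (decr_nth r d).
Proof.
rewrite /fact_prod size_decr_nth; last by case/andP: d_r.
rewrite (big_decr_nth _ (fun _ x => x`!)) // (bigD1_nat _ d) //= mulnA; congr (_ * _).
by rewrite -(prednK r_d) factS prednK.
Qed.

Lemma multinom_decr_nth : nint r * multinom (decr_nth r d) = nth 0 r d * multinom r.
Proof.
apply/eqP; rewrite -(eqn_pmul2r (fact_prod_gt0 (decr_nth r d))) -mulnA multinom_fact_prod.
rewrite nint_decr_nth mulnAC -fact_prod_decr_nth [fact_prod r * _]mulnC multinom_fact_prod.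
by apply/eqP; rewrite -[in RHS](prednK nint_gt0) factS prednK ?nint_gt0.
Qed.

Lemma degprod_decr_nth : degprod r = d * degprod (decr_nth r d).
Proof.
rewrite /degprod size_decr_nth; last by case/andP: d_r.
by rewrite (big_decr_nth _ (fun i x => i ^ x)) // (bigD1_nat _ d) //= mulnA -expnS prednK.
Qed.

End DecrNth.

Definition CF_one_in_tree r k q F := CF r k F /\ 1 \in labels (nth CLeaf F q).
Definition CF_one_in_prefix r k j F := CF r k F /\ 1 \in forest_labels (take j F).

Lemma CF_rot r k n F : CF r k F -> CF r k (rot n F).
Proof.
have perm_rotF (f : ctree -> seq nat) : perm_eq (flatten (map f (rot n F))) (flatten (map f F)).
  by rewrite map_rot; apply: perm_flatten; rewrite perm_rot.
case=> F_type F_labels F_proper; split.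
- by move=> i; rewrite -F_type; apply/permP/perm_rotF.
- by rewrite (perm_size (perm_rotF labels)) (perm_trans (perm_rotF labels)).
- by rewrite /rot all_cat andbC -all_cat cat_take_drop.
Qed.

Lemma card_CF_one_in_tree r k q N : (q%:Z < ell r)%R ->
  card_is (CF_one_in_tree r k 0) N -> card_is (CF_one_in_tree r k q) N.
Proof.
move=> q_ell card0.
have nth_rot0 F : q < size F -> nth CLeaf (rot q F) 0 = nth CLeaf F q.
  by move=> q_F; rewrite /rot nth_cat size_drop subn_gt0 q_F nth_drop addn0.
apply: eq_card_is (card_is_image (f := rotr q) card0 _) => [F|F G _ _]; last first.
  by rewrite -{2}(rotrK q F) => ->; rewrite rotrK.
split=> [[G [[G_CF G_one] ->]]|[F_CF F_one]].
  have q_G : q < size (rotr q G) by rewrite size_rotr -ltz_nat (size_CF G_CF).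
  by split; [apply: CF_rot | rewrite -(nth_rot0 _ q_G) rotrK].
have q_F : q < size F by rewrite -ltz_nat (size_CF F_CF).
by exists (rot q F); split; [split; [apply: CF_rot | rewrite nth_rot0] | rewrite rotK].
Qed.

Lemma card_CF_one_in_prefix r k j N : (j%:Z <= ell r)%R ->
  card_is (CF_one_in_tree r k 0) N -> card_is (CF_one_in_prefix r k j) (j * N).
Proof.
move=> j_ell card0; elim: j j_ell => [|j IH] j_ell.
  by apply: card_is0 => F [_]; rewrite take0.
have j_F F : CF r k F -> j < size F.
  by move=> F_CF; rewrite -ltz_nat (size_CF F_CF); apply: lt_le_trans j_ell; rewrite ltz_nat.
have labels_take F : CF r k F ->
    forest_labels (take j.+1 F) = forest_labels (take j F) ++ labels (nth CLeaf F j).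
  move=> F_CF; rewrite (take_nth CLeaf (j_F F F_CF)) -cats1 forest_labels_cat.
  by rewrite /forest_labels /= cats0.
have disjoint F : CF_one_in_prefix r k j F -> CF_one_in_tree r k j F -> False.
  move=> [F_CF one_pre] [_ one_j]; have := uniq_forest_labels_CF F_CF.
  rewrite -{1}(cat_take_drop j F) forest_labels_cat (drop_nth CLeaf (j_F F F_CF)).
  rewrite cat_uniq => /and3P [_ /hasPn /(_ 1)].
  by rewrite /forest_labels /= mem_cat one_j one_pre => /(_ isT).
have j_ell' : (j%:Z < ell r)%R by apply: lt_le_trans j_ell; rewrite ltz_nat.
have card_j := card_CF_one_in_tree j_ell' card0.
rewrite mulSn addnC; apply: eq_card_is (card_is_union (IH (ltW j_ell')) card_j disjoint) => F.
split=> [[[F_CF one]|[F_CF one]]|[F_CF]]; rewrite /CF_one_in_prefix labels_take // mem_cat.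
- by rewrite one.
- by rewrite one orbT.
- by case/orP=> one; [left|right].
Qed.

Lemma card_CF_via_first_tree r k N : (1 <= nint r)%N -> (0 <= ell r)%R ->
  card_is (CF_one_in_tree r k 0) N -> card_is (CF r k) (absz (ell r) * N).
Proof.
move=> n_gt0 ell_ge0 card0; have ellE : ((absz (ell r))%:Z = ell r)%R by rewrite gez0_abs.
apply: eq_card_is (card_CF_one_in_prefix _ card0) => [F|]; last by rewrite ellE.
split=> [[]//|F_CF]; split=> //.
have ->: absz (ell r) = size F by apply/eqP; rewrite -eqz_nat ellE (size_CF F_CF).
case: F_CF (size_forest_labels_CF F_CF) => _ F_labels _ sizeF.
by rewrite take_size (perm_mem F_labels) mem_iota sizeF; lia.
Qed.

Definition ordinary_color d (c : color) := exists2 i, 1 <= i <= d & c = inl i.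
Definition special_color k (c : color) := exists2 j, 1 <= j <= k & c = inr j.

Lemma card_ordinary_color d : card_is (ordinary_color d) d.
Proof.
have := card_is_interval 1 d.+1; rewrite subn1 => /(card_is_image (f := @inl nat nat)) card_inl.
apply: eq_card_is (card_inl _) => [c|x y _ _ [] //].
by split=> [[i [i_d ->]]|[i i_d ->]]; exists i.
Qed.

Lemma card_root_color d k : card_is (fun c => ordinary_color d c \/ special_color k c) (d + k).
Proof.
have := card_is_interval 1 k.+1; rewrite subn1 => /(card_is_image (f := @inr nat nat)) card_inr.
apply: card_is_union (card_ordinary_color d) _ _ => [|c [i _ ->] [j _] //].
apply: eq_card_is (card_inr _) => [c|x y _ _ [] //].
by split=> [[j [j_k ->]]|[j j_k ->]]; exists j.
Qed.

Lemma ltn_bump2 h : {mono bump h : x y / x < y}.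
Proof. by move=> x y; rewrite !ltnNge leq_bump2. Qed.

Lemma relabel_bumpK l F : map (relabel (unbump l)) (map (relabel (bump l)) F) = F.
Proof.
rewrite -map_comp -[RHS]map_id; apply: eq_map => t /=.
by rewrite relabel_comp relabel_id_in // => x _ /=; rewrite bumpK.
Qed.

Lemma relabel_unbumpK l F : l \notin forest_labels F ->
  map (relabel (bump l)) (map (relabel (unbump l)) F) = F.
Proof.
elim: F => //= t F IH; rewrite /forest_labels /= mem_cat negb_or => /andP [l_t l_F].
rewrite IH // relabel_comp relabel_id_in // => x x_t /=.
by rewrite unbumpK // inE; apply: contraNneq l_t => <-.
Qed.

Lemma perm_bump_iota l m : 1 <= l <= m.+1 ->
  perm_eq (l :: map (bump l) (iota 1 m)) (iota 1 m.+1).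
Proof.
move=> l_m; apply: uniq_perm; last 1 first.
- move=> x; rewrite in_cons mem_iota; apply/idP/idP.
    by case/orP=> [/eqP ->|/mapP [y]]; [lia | rewrite mem_iota /bump => y_m ->; lia].
  move=> x_m; case: eqVneq => [//|x_l] /=; apply/mapP; exists (unbump l x).
    by rewrite mem_iota /unbump; lia.
  by rewrite unbumpK // inE.
- rewrite /= (map_inj_uniq (can_inj (bumpK l))) iota_uniq andbT.
  by apply/mapP=> [[x _ /eqP]]; rewrite (negPf (neq_bump l x)).
- exact: iota_uniq.
Qed.

Definition graft (p : nat * nat * color * cforest) : cforest :=
  let: (d, l, c, G) := p in
  let X := map (relabel (bump l)) G in CNode l c (take d X) :: drop d X.

(* Label 1 has to end up in the first tree; for l > 1 it then lies in one of
   the d subtrees of the new root, which makes that root improper. *)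
Definition graftable r k (p : nat * nat * color * cforest) : Prop :=
  let: (d, l, c, G) := p in
  [/\ 1 <= d < size r, 0 < nth 0 r d, CF (decr_nth r d) k G &
      (l = 1 /\ ordinary_color d c) \/
      [/\ 2 <= l <= nint r, ordinary_color d c \/ special_color k c
        & 1 \in forest_labels (take d G)]].

Lemma graftable_size r k d l c G : (1 <= ell r)%R -> graftable r k (d, l, c, G) -> d <= size G.
Proof.
move=> ell_ge1 [d_r r_d G_CF _]; have := size_CF G_CF.
by rewrite ell_decr_nth // -lez_nat => ->; lia.
Qed.

Lemma graft_inj r k p1 p2 : (1 <= ell r)%R ->
  graftable r k p1 -> graftable r k p2 -> graft p1 = graft p2 -> p1 = p2.
Proof.
case: p1 p2 => [[[d1 l1] c1] G1] [[[d2 l2] c2] G2] ell_ge1 p1_ok p2_ok [<- <-].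
have d1_G1 := graftable_size ell_ge1 p1_ok; have d2_G2 := graftable_size ell_ge1 p2_ok.
move=> take_eq drop_eq; have d1_d2 : d1 = d2.
  by have := congr1 size take_eq; rewrite !size_takel ?size_map.
rewrite -d1_d2 in take_eq drop_eq *; congr (_, _).
rewrite -(relabel_bumpK l1 G1) -(relabel_bumpK l1 G2); congr map.
by rewrite -(cat_take_drop d1 (map _ G1)) take_eq drop_eq cat_take_drop.
Qed.

Lemma forest_labels_graft d l c G :
  forest_labels (graft (d, l, c, G)) = l :: map (bump l) (forest_labels G).
Proof.
rewrite -forest_labels_relabel -[in RHS](cat_take_drop d (map _ G)) forest_labels_cat.
by rewrite /forest_labels.
Qed.

Lemma forest_degs_graft d l c G : d <= size G ->
  forest_degs (graft (d, l, c, G)) = d :: forest_degs G.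
Proof.
move=> d_G; rewrite -[in RHS](forest_degs_relabel (bump l)) -[in RHS](cat_take_drop d (map _ G)).
by rewrite forest_degs_cat /forest_degs /= size_takel ?size_map.
Qed.

Lemma graft_CF_one_in_first r k p : (1 <= ell r)%R -> graftable r k p ->
  CF_one_in_tree r k 0 (graft p).
Proof.
case: p => [[[d l] c] G] ell_ge1 p_ok; have d_G := graftable_size ell_ge1 p_ok.
case: p_ok => d_r r_d G_CF root.
have G_size := size_forest_labels_CF G_CF; rewrite nint_decr_nth // in G_size.
have n_gt0 := nint_gt0 d_r r_d.
have l_n : 1 <= l <= nint r by case: root => [[-> _]|[]]; lia.
set X := map (relabel (bump l)) G.
have one_X : 1 < l -> 1 \in forest_labels (take d G) -> 1 \in forest_labels (take d X).
  move=> l_gt1 one_G; rewrite -map_take forest_labels_relabel; apply/mapP; exists 1 => //.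
  by rewrite /bump leqNgt l_gt1.
split; last first.
  rewrite /= in_cons; case: root => [[-> _]|[l_ge2 _ one_G]] //.
  by rewrite one_X ?orbT //; lia.
case: G_CF => G_type G_perm G_proper; split.
- move=> i; rewrite forest_degs_graft //= G_type nth_decr_nth.
  by case: (eqVneq i d) => [->|] /=; lia.
- have bump_iota := @perm_bump_iota l (nint r).-1 ltac:(lia).
  rewrite forest_labels_graft /= size_map G_size; apply: perm_trans bump_iota.
  by rewrite perm_cons; apply: perm_map; rewrite -G_size.
have X_proper : all (proper_colored k) X by rewrite all_proper_colored_relabel //; apply: ltn_bump2.
rewrite -(cat_take_drop d X) all_cat in X_proper; case/andP: X_proper => take_proper drop_proper.
rewrite /= take_proper drop_proper !andbT size_takel ?size_map //.
case: root => [[-> [i i_d ->]]|[l_ge2 [[i i_d ->]|[j j_k ->]] one_G]] /=;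
  rewrite ?i_d ?j_k; try lia.
have one_sub : 1 \in forest_labels (take d X) by apply: one_X; lia.
by apply/and3P; split=> //; [lia | apply/hasP; exists 1 => //; lia].
Qed.

Lemma CF_prune_root r k l c ch rest : CF r k (CNode l c ch :: rest) ->
  [/\ 1 <= size ch < size r, 0 < nth 0 r (size ch), 1 <= l <= nint r,
      l \notin forest_labels (ch ++ rest)
    & CF (decr_nth r (size ch)) k (map (relabel (unbump l)) (ch ++ rest))].
Proof.
move=> F_CF; have F_uniq := uniq_forest_labels_CF F_CF; have F_size := size_forest_labels_CF F_CF.
have labelsE : forest_labels (CNode l c ch :: rest) = l :: forest_labels (ch ++ rest).
  by rewrite forest_labels_cat.
have degsE : forest_degs (CNode l c ch :: rest) = size ch :: forest_degs (ch ++ rest).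
  by rewrite forest_degs_cat.
case: F_CF => F_type F_perm /andP [/and3P [ch_gt0 _ ch_proper] rest_proper].
have r_d : 0 < nth 0 r (size ch) by rewrite -F_type degsE /= eqxx.
have d_r : size ch < size r by rewrite ltnNge; apply: contraTN r_d => ?; rewrite nth_default.
have l_n : 1 <= l <= nint r.
  by have := perm_mem F_perm l; rewrite F_size labelsE mem_head mem_iota; lia.
have l_notin : l \notin forest_labels (ch ++ rest) by move: F_uniq; rewrite labelsE => /andP [].
set G := map (relabel (unbump l)) (ch ++ rest).
have GX : map (relabel (bump l)) G = ch ++ rest by rewrite relabel_unbumpK.
have G_size : size (forest_labels G) = (nint r).-1.
  by rewrite -(size_map (bump l)) -forest_labels_relabel GX -F_size labelsE.
split; rewrite ?ch_gt0 //; split.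
- move=> i; rewrite nth_decr_nth forest_degs_relabel; have := F_type i; rewrite degsE /=.
  by case: (eqVneq i (size ch)) => [->|] /=; lia.
- have bump_iota := @perm_bump_iota l (nint r).-1 ltac:(lia).
  have n_gt0 : 0 < nint r by lia.
  rewrite (prednK n_gt0) in bump_iota.
  rewrite G_size; apply: (perm_map_inj (can_inj (bumpK l))); rewrite -(perm_cons l).
  rewrite -forest_labels_relabel GX -labelsE; apply: perm_trans F_perm _.
  by rewrite F_size perm_sym.
- by rewrite -(all_proper_colored_relabel k _ (@ltn_bump2 l)) GX all_cat ch_proper.
Qed.

Lemma CF_label_gt0 r k F x : CF r k F -> x \in forest_labels F -> 0 < x.
Proof. by case=> _ F_perm _; rewrite (perm_mem F_perm) mem_iota => /andP []. Qed.

Lemma CF_one_in_first_graft r k F :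
  CF_one_in_tree r k 0 F -> exists2 p, graftable r k p & F = graft p.
Proof.
case=> F_CF one_F; case: F F_CF one_F => [|[|l c ch] rest] //= F_CF one_F.
have [d_r r_d l_n l_notin G_CF] := CF_prune_root F_CF.
have GX : map (relabel (bump l)) (map (relabel (unbump l)) (ch ++ rest)) = ch ++ rest.
  exact: relabel_unbumpK.
exists (size ch, l, c, map (relabel (unbump l)) (ch ++ rest)); last first.
  by rewrite /graft GX take_size_cat // drop_size_cat.
have [_ _ /andP [/and3P [_ c_ok _] _]] := F_CF.
split=> //; case: (eqVneq l 1) => [l1|l_ne1]; [left | right].
  split=> //; case: c F_CF c_ok => [i|j] F_CF /= c_ok; first by exists i.
  case/andP: c_ok => _ /hasP [x x_ch x_lt1].
  suff : 0 < x by lia.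
  by apply: (CF_label_gt0 F_CF); rewrite /forest_labels /= in_cons mem_cat x_ch orbT.
split; first lia.
  case: c F_CF c_ok => [i|j] F_CF /= c_ok; first by left; exists i.
  by right; exists j; case/andP: c_ok.
move: one_F; rewrite in_cons eq_sym (negPf l_ne1) /= => one_ch.
rewrite -map_take take_size_cat // forest_labels_relabel; apply/mapP; exists 1 => //.
by rewrite /unbump; lia.
Qed.

Lemma card_graftable_deg r k d C T : 1 <= d < size r -> 0 < nth 0 r d ->
  card_is (CF (decr_nth r d) k) C -> card_is (CF_one_in_prefix (decr_nth r d) k d) T ->
  card_is (fun p => p.1.1.1 = d /\ graftable r k p) (d * C + (nint r).-1 * (d + k) * T).
Proof.
move=> d_r r_d card_CF card_prefix.
have card_proper := card_is_image (f := fun q : color * cforest => (d, 1, q.1, q.2))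
  (card_is_prod (card_ordinary_color d) card_CF).
have card_label : card_is (fun l => 2 <= l < (nint r).+1) (nint r).-1.
  by have := card_is_interval 2 (nint r).+1; rewrite subSS subn1.
have card_improper := card_is_image (f := fun q : nat * color * cforest => (d, q.1.1, q.1.2, q.2))
  (card_is_prod (card_is_prod card_label (card_root_color d k)) card_prefix).
apply: eq_card_is (card_is_union (card_proper _) (card_improper _) _).
- move=> [[[d' l] c] G]; split.
    case=> [[[c' G'] [[c_ok G_CF] [-> -> -> ->]]]|
            [[[l' c'] G'] [[[l_n c_ok] [G_CF one]] [-> -> -> ->]]]].
      by split=> //; split=> //; left.
    by split=> //; split=> //; right; split=> //; lia.
  move=> /= [-> [_ _ G_CF [[-> c_ok]|[l_n c_ok one]]]]; first by left; exists (c, G).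
  by right; exists (l, c, G); split=> //; split=> //; split=> //; lia.
- by move=> [? ?] [? ?] _ _ [-> ->].
- by move=> [[? ?] ?] [[? ?] ?] _ _ [-> -> ->].
- by move=> p [[c G] [_ ->]] [[[l c'] G'] [[[/= l_ge2 _] _] [l1 _ _]]]; rewrite -l1 in l_ge2.
Qed.

Lemma card_CF_one_in_first_rec r k (C T : nat -> nat) : (1 <= ell r)%R ->
  (forall d, 1 <= d < size r -> 0 < nth 0 r d -> card_is (CF (decr_nth r d) k) (C d)) ->
  (forall d, 1 <= d < size r -> 0 < nth 0 r d ->
     card_is (CF_one_in_prefix (decr_nth r d) k d) (T d)) ->
  card_is (CF_one_in_tree r k 0)
    (\sum_(1 <= d < size r | 0 < nth 0 r d) (d * C d + (nint r).-1 * (d + k) * T d)).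
Proof.
move=> ell_ge1 card_CF card_prefix; rewrite big_mkcond /=.
have card_graftable : card_is (fun p => exists2 d, d \in index_iota 1 (size r) &
    p.1.1.1 = d /\ graftable r k p)
    (\sum_(1 <= d < size r) if 0 < nth 0 r d then d * C d + (nint r).-1 * (d + k) * T d else 0).
  apply: card_is_big_union (iota_uniq _ _) _ _ => [d|d d' p _ _ [<- _] [<- _] //].
  rewrite mem_index_iota => d_r /=; case: ifPn => [r_d|].
    by apply: card_graftable_deg; [| | apply: card_CF | apply: card_prefix].
  rewrite -eqn0Ngt => /eqP r_d; apply: card_is0 => -[[[d' l] c] G] /= [-> [_ r_d' _ _]].
  by rewrite r_d in r_d'.
apply: eq_card_is (card_is_image (f := graft) card_graftable _) => [F|]; last first.
  by move=> p p' [d _ [_ p_ok]] [d' _ [_ p'_ok]]; apply: graft_inj ell_ge1 p_ok p'_ok.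
split=> [[p [[d _ [_ p_ok]] ->]]|F_one]; first exact: graft_CF_one_in_first ell_ge1 p_ok.
have [[[[d l] c] G] p_ok ->] := CF_one_in_first_graft F_one.
by exists (d, l, c, G); split=> //; exists d; rewrite ?mem_index_iota //; case: p_ok.
Qed.

Section EmptyType.

Variable r : seq nat.
Hypothesis n0 : nint r = 0.

Lemma nth_nint0 d : 1 <= d -> nth 0 r d = 0.
Proof.
move=> d_gt0; case: (ltnP d (size r)) => d_r; last by rewrite nth_default.
by move: n0; rewrite /nint (bigD1_nat _ d) /=; lia.
Qed.

Lemma multinom_nint0 : multinom r = 1.
Proof. by have := multinom_fact_prod r; rewrite n0 => /eqP; rewrite muln_eq1 => /andP [/eqP]. Qed.

Lemma degprod_nint0 : degprod r = 1.
Proof.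
rewrite /degprod big_nat_cond big1 // => d /andP [/andP [d_gt0 _] _].
by rewrite nth_nint0.
Qed.

Lemma card_CF_nint0 k : card_is (CF r k) 1.
Proof.
have degs_leaves m : forest_degs (nseq m CLeaf) = nseq m 0.
  by elim: m => //= m IH; rewrite /forest_degs /= -/(forest_degs _) IH.
have labels_leaves m : forest_labels (nseq m CLeaf) = [::].
  by elim: m => //= m IH; rewrite /forest_labels /= -/(forest_labels _) IH.
apply: eq_card_is (card_is_singleton (nseq (nth 0 r 0) CLeaf)) => F; split=> [->|].
  split; rewrite ?labels_leaves ?all_nseq ?orbT // => i.
  by rewrite degs_leaves count_nseq; case: i => [|i] /=; rewrite ?mul1n // mul0n nth_nint0.
case=> F_type _ F_proper.
have F_leaves : F = nseq (size F) CLeaf.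
  have degs0 : all (pred1 0) (forest_degs F).
    apply/allP => x x_F /=; rewrite eqn0Ngt; apply/negP => x_gt0; move: (F_type x).
    by rewrite nth_nint0 // => /eqP; rewrite -leqn0 leqNgt -has_count has_pred1 x_F.
  elim: F F_proper degs0 {F_type} => //= t F IH /andP [t_proper F_proper].
  rewrite /forest_degs /= all_cat -/(forest_degs F) => /andP [t_degs F_degs]; rewrite -IH //.
  by case: t t_proper t_degs => //= l c ch /andP [ch_gt0 _] /andP [/eqP ch0]; rewrite ch0 in ch_gt0.
rewrite F_leaves in F_type *; congr nseq.
by have := F_type 0; rewrite degs_leaves count_nseq /= mul1n.
Qed.

Lemma card_CF_one_in_tree_nint0 k q : card_is (CF_one_in_tree r k q) 0.
Proof.
apply: card_is0 => F [F_CF one_q]; have := size_forest_labels_CF F_CF; rewrite n0 => /size0nil.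
have q_F : q < size F by rewrite ltnNge; apply: contraTN one_q => ?; rewrite nth_default.
suff one_F : 1 \in forest_labels F by move=> F_nil; rewrite F_nil in one_F.
apply/flattenP; exists (labels (nth CLeaf F q)) => //.
by rewrite -(nth_map CLeaf [::]) ?mem_nth ?size_map.
Qed.

End EmptyType.

Lemma ell_add_sum_deg r : 0 < size r -> (0 <= ell r)%R ->
  absz (ell r) + \sum_(1 <= d < size r) d * nth 0 r d = nth 0 r 0 + nint r.
Proof.
move=> r_gt0 ell_ge0; set S := \sum_(1 <= d < size r) _.
have ellE : ell r =
    ((\sum_(0 <= d < size r) nth 0 r d)%:Z - (\sum_(0 <= d < size r) d * nth 0 r d)%:Z)%R.
  rewrite /ell !(big_morph Posz PoszD (erefl (Posz 0))) -sumrN -sumrB.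
  by apply: eq_bigr => i _; rewrite PoszM; ring.
rewrite big_ltn // [\sum_(0 <= d < _) _ * _]big_ltn //= mul0n add0n -/S -/(nint r) in ellE.
apply/eqP; rewrite -eqz_nat !PoszD gez0_abs // ellE; apply/eqP; ring.
Qed.

Definition first_count r k :=
  multinom r * degprod r * \prod_(1 <= i < nint r) (nth 0 r 0 + i * (1 + k)).

Lemma first_count_nint0 r k : nint r = 0 -> first_count r k = 1.
Proof. by move=> n0; rewrite /first_count multinom_nint0 // degprod_nint0 // n0 big_geq. Qed.

Lemma first_count_decr_nth r k d n : 1 <= d < size r -> 0 < nth 0 r d -> nint r = n.+1 ->
  n.+1 * (d * first_count (decr_nth r d) k) =
  nth 0 r d * (multinom r * degprod r * \prod_(1 <= i < n) (nth 0 r 0 + i * (1 + k))).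
Proof.
move=> d_r r_d n_r; have := multinom_decr_nth d_r r_d; rewrite n_r => multinomE.
rewrite /first_count nint_decr_nth // n_r nth0_decr_nth // (degprod_decr_nth d_r r_d).
set P := \prod_(1 <= i < n) _.
transitivity (n.+1 * multinom (decr_nth r d) * (d * degprod (decr_nth r d)) * P); first ring.
by rewrite multinomE; ring.
Qed.

Lemma sum_pos_nth r (F : nat -> nat) c : (forall d, 1 <= d < size r -> 0 < nth 0 r d ->
  F d = nth 0 r d * c d) ->
  \sum_(1 <= d < size r | 0 < nth 0 r d) F d = \sum_(1 <= d < size r) nth 0 r d * c d.
Proof.
move=> Fc; rewrite big_mkcond; apply: eq_big_nat => d d_r /=.
by case: (posnP (nth 0 r d)) => [->|r_d]; [rewrite mul0n | exact: Fc].
Qed.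

Lemma first_count_nint1 r k : nint r = 1 ->
  \sum_(1 <= d < size r | 0 < nth 0 r d) d = first_count r k.
Proof.
move=> n1; rewrite (@sum_pos_nth _ _ (fun=> multinom r * degprod r)) => [|d d_r r_d].
  by rewrite -big_distrl /= -/(nint r) n1 mul1n /first_count n1 big_geq ?muln1.
have := first_count_decr_nth k d_r r_d n1.
by rewrite first_count_nint0 ?nint_decr_nth ?n1 // big_geq // !mul1n !muln1.
Qed.

(* Here ell(r) - 1 + d = ell(r - e_d) comes from the proper roots of degree d and
   (n - 1)(d + k) from the improper ones. *)
Lemma sum_root_weights r k n : nint r = n.+2 -> (1 <= ell r)%R ->
  \sum_(1 <= d < size r) nth 0 r d * ((absz (ell r)).-1 + d + n.+1 * (d + k)) =
  n.+2 * (nth 0 r 0 + n.+1 * (1 + k)).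
Proof.
move=> n_r ell_ge1.
have r_gt0 : 0 < size r by move: n_r; rewrite /nint; case: (size r) => //; rewrite big_geq.
have := ell_add_sum_deg r_gt0 (le_trans ler01 ell_ge1); rewrite n_r => sum_deg.
rewrite (eq_bigr (fun d => ((absz (ell r)).-1 + n.+1 * k) * nth 0 r d + n.+2 * (d * nth 0 r d))).
  by rewrite big_split /= -!big_distrr /= -/(nint r) n_r; nia.
by move=> d _; ring.
Qed.

Lemma first_count_step r k n : nint r = n.+2 -> (1 <= ell r)%R ->
  \sum_(1 <= d < size r | 0 < nth 0 r d)
    d * (absz (ell (decr_nth r d)) + n.+1 * (d + k)) * first_count (decr_nth r d) k =
  first_count r k.
Proof.
move=> n_r ell_ge1.
pose c := multinom r * degprod r * \prod_(1 <= i < n.+1) (nth 0 r 0 + i * (1 + k)).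
have e_gt0 : 0 < absz (ell r) by rewrite -ltz_nat gez0_abs ?(le_trans ler01 ell_ge1).
apply/eqP; rewrite -(eqn_pmul2l (ltn0Sn n.+1)) big_distrr /=; apply/eqP.
rewrite (@sum_pos_nth _ _ (fun d => c * ((absz (ell r)).-1 + d + n.+1 * (d + k)))).
  rewrite (eq_bigr (fun d => c * (nth 0 r d * ((absz (ell r)).-1 + d + n.+1 * (d + k))))).
    by rewrite -big_distrr /= sum_root_weights // /first_count n_r big_nat_recr //= /c; ring.
  by move=> d _; ring.
move=> d d_r r_d; have := first_count_decr_nth k d_r r_d n_r; rewrite -/c => countE.
have -> : absz (ell (decr_nth r d)) = (absz (ell r)).-1 + d by rewrite absz_ell_decr_nth //; lia.
transitivity (n.+2 * (d * first_count (decr_nth r d) k) * ((absz (ell r)).-1 + d + n.+1 * (d + k))).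
  by ring.
by rewrite countE; ring.
Qed.

Lemma card_CF_one_in_first k n r : nint r = n.+1 -> (1 <= ell r)%R ->
  card_is (CF_one_in_tree r k 0) (first_count r k).
Proof.
elim: n r => [|n IH] r n_r ell_ge1.
  have n0 d : 1 <= d < size r -> 0 < nth 0 r d -> nint (decr_nth r d) = 0.
    by move=> d_r r_d; rewrite nint_decr_nth // n_r.
  have -> : first_count r k = \sum_(1 <= d < size r | 0 < nth 0 r d)
      (d * 1 + (nint r).-1 * (d + k) * (d * 0)).
    by rewrite -first_count_nint1 //; apply: eq_bigr => d _; rewrite muln1 !muln0 addn0.
  apply: (card_CF_one_in_first_rec ell_ge1) => [d d_r r_d|d d_r r_d].
    exact/card_CF_nint0/n0.
  apply: card_CF_one_in_prefix (card_CF_one_in_tree_nint0 (n0 d d_r r_d) k 0).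
  by rewrite ell_decr_nth //; lia.
have card_decr d : 1 <= d < size r -> 0 < nth 0 r d ->
    card_is (CF_one_in_tree (decr_nth r d) k 0) (first_count (decr_nth r d) k).
  by move=> d_r r_d; apply: IH; rewrite ?nint_decr_nth ?ell_decr_nth ?n_r //; lia.
have -> : first_count r k = \sum_(1 <= d < size r | 0 < nth 0 r d)
    (d * (absz (ell (decr_nth r d)) * first_count (decr_nth r d) k) +
     (nint r).-1 * (d + k) * (d * first_count (decr_nth r d) k)).
  by rewrite -(first_count_step k n_r ell_ge1); apply: eq_bigr => d _; rewrite n_r /=; ring.
apply: (card_CF_one_in_first_rec ell_ge1) => [d d_r r_d|d d_r r_d].
  apply: card_CF_via_first_tree (card_decr d d_r r_d); rewrite ?nint_decr_nth ?ell_decr_nth ?n_r //.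
  by lia.
by apply: card_CF_one_in_prefix (card_decr d d_r r_d); rewrite ell_decr_nth //; lia.
Qed.

Theorem proposition3p3 (r : seq nat) (k : nat) :
  (1 <= nint r)%N -> (1 <= ell r)%R ->
  exists N : nat, card_is (CF r k) N /\
    (N%:Z = (multinom r * degprod r *
             \prod_(1 <= i < nint r) (nth 0 r 0 + i * (1 + k)))%N%:Z * ell r)%R.
Proof.
move=> n_gt0 ell_ge1; exists (absz (ell r) * first_count r k); split.
  apply: card_CF_via_first_tree (le_trans ler01 ell_ge1) _ => //.
  by apply: (@card_CF_one_in_first k (nint r).-1); rewrite ?prednK.
by rewrite PoszM mulrC gez0_abs // (le_trans ler01 ell_ge1).
Qed.
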